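(* For all integers $d\ge 2$ and $n\ge 1$, every Latin hypercuboid in $\mathrm{LHC}(d,n,1)$ is completable. Consequently $\mathrm{NC}_d(n)\ge 2$ whenever it is defined.
   Context: $[n]=\{1,\dots,n\}$. For integers $d\ge2$ and $1\le k\le n$, $\mathrm{LHC}(d,n,k)$ denotes the set of $d$-dimensional arrays of dimensions $n\times\cdots\times n\times k$ (the last coordinate ranging over $[k]$, the others over $[n]$) with entries from $[n]$ such that each symbol occurs at most once in each axis-parallel line (a set of cells obtained by fixing all coordinates but one). A hypercuboid $H\in\mathrm{LHC}(d,n,k)$ is completable if it is contained in (i.e. equals the restriction to the first $k$ values of the last coordinate of) some array in $\mathrm{LHC}(d,n,n)$ (a Latin hypercube). $\mathrm{NC}_d(n)$ denotes the smallest $k$ such that some hypercuboid in $\mathrm{LHC}(d,n,k)$ is not completable. *)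

From mathcomp Require Import all_boot.
Set Implicit Arguments. Unset Strict Implicit. Unset Printing Implicit Defensive.

(* A cell of an n x ... x n x k array of dimension d: the first d-1
   coordinates range over 'I_n (a finite function 'I_(d-1) -> 'I_n),
   the last coordinate ranges over 'I_k. *)
Definition cell (d n k : nat) := ({ffun 'I_d.-1 -> 'I_n} * 'I_k)%type.

Definition array (d n k : nat) := cell d n k -> 'I_n.

Definition is_LHC (d n k : nat) (H : array d n k) : Prop :=
  (forall (x : {ffun 'I_d.-1 -> 'I_n}) (t t' : 'I_k),
      H (x, t) = H (x, t') -> t = t') /\
  (forall (i : 'I_d.-1) (x y : {ffun 'I_d.-1 -> 'I_n}) (t : 'I_k),
      (forall j : 'I_d.-1, j != i -> x j = y j) ->
      H (x, t) = H (y, t) -> x = y).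

Definition completable (d n k : nat) (H : array d n k) : Prop :=
  exists L : array d n n, is_LHC L /\
    forall (x : {ffun 'I_d.-1 -> 'I_n}) (t : 'I_k) (t' : 'I_n),
      nat_of_ord t = nat_of_ord t' -> H (x, t) = L (x, t').

(* A single layer H extends to a Latin hypercube by cyclically shifting its
   symbols along the last coordinate: L(x, t) = H(x, 0) + t in Z/nZ.  Each
   layer of L is H followed by a bijection of the symbols, so it is still
   Latin, and along the last coordinate the map t |-> H(x, 0) + t is
   injective. *)
From mathcomp Require Import all_boot ssralg zmodp.
Import GRing.Theory.

Set Implicit Arguments.
Unset Strict Implicit.
Unset Printing Implicit Defensive.

Section CyclicExtension.

Variables (d n : nat) (H : array d n.+1 1).

Definition cyclic_extension : array d n.+1 n.+1 :=
  fun c => (H (c.1, ord0) + c.2)%R.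

Lemma cyclic_extension_LHC : is_LHC H -> is_LHC cyclic_extension.
Proof.
move=> [_ H_lines]; split=> [x t t' | i x y t Exy].
- by rewrite /cyclic_extension /= => /addrI.
- by rewrite /cyclic_extension /= => /addIr; apply: H_lines i x y ord0 Exy.
Qed.

Lemma cyclic_extension_restrict (x : {ffun 'I_d.-1 -> 'I_n.+1}) (t : 'I_1)
    (t' : 'I_n.+1) :
  t = t' :> nat -> H (x, t) = cyclic_extension (x, t').
Proof.
have -> : t = ord0 by rewrite ord1.
move=> t'0; have -> : t' = 0%R by apply: val_inj.
by rewrite /cyclic_extension /= addr0.
Qed.

End CyclicExtension.

Lemma completable_height1 (d n : nat) (H : array d n 1) :
  0 < n -> is_LHC H -> completable H.
Proof.
case: n H => // n H _ LH.
exists (cyclic_extension H); split; first exact: cyclic_extension_LHC.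
exact: cyclic_extension_restrict.
Qed.

Theorem mainTheorem5 (d n : nat) (hd : 2 <= d) (hn : 1 <= n) :
  (forall H : array d n 1, is_LHC H -> completable H) /\
  (* consequently NC_d(n) >= 2 whenever defined: every k admitting a
     non-completable hypercuboid in LHC(d,n,k) satisfies k >= 2 *)
  (forall k : nat, 1 <= k <= n ->
     (exists H : array d n k, is_LHC H /\ ~ completable H) -> 2 <= k).
Proof.
split=> [H | k /andP [k_gt0 _] [H [LH not_completable]]].
  exact: completable_height1.
rewrite ltnNge; apply/negP => k_le1.
have k1 : k = 1 by apply/eqP; rewrite eqn_leq k_le1.
subst k; exact: not_completable (completable_height1 hn LH).
Qed.
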